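(* Let $n\ge2$ and $1\le p\le n-1$. A permutation $\pi\in S_n$ is a $p$-resultant permutation if and only if $\{\pi_1,\dots,\pi_{n-p}\}=\{1,\dots,n-p\}$, i.e. $(\pi_1,\dots,\pi_{n-p})\in S_{n-p}$.
   Context: For $m\ge1$, $1\le p\le m$: sites are $0,\dots,m+1$; a configuration in $\mathcal{S}(m,p)$ places $m+1$ distinct chips labeled $1,\dots,m+1$ with sites $0,m+1$ empty, one chip at each site of $\{1,\dots,m\}\setminus\{p\}$ and two chips at site $p$. Toppling: while some site holds at least two chips, choose such a site $i$ and two chips $\alpha<\beta$ there and move $\alpha$ to $i-1$, $\beta$ to $i+1$. It is known this terminates with at most one chip per site within sites $0,\dots,m+1$ and the final configuration is independent of the choices; reading chip labels left to right gives a permutation in $S_{m+1}$, to which the configuration is said to topple. A permutation $\pi\in S_n$ is $p$-resultant if some configuration in $\mathcal{S}(n-1,p)$ topples to $\pi$. *)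

From mathcomp Require Import all_boot all_order all_algebra all_fingroup.
Set Implicit Arguments. Unset Strict Implicit. Unset Printing Implicit Defensive.
Import Order.TTheory GRing.Theory Num.Theory.

(* Chips labeled 1..n are modeled by the ordinals 'I_n (label k+1 <-> k),
   which preserves the order of labels.  A configuration assigns to every
   chip its site (an integer). *)
Definition config (n : nat) := 'I_n -> int.

Definition topple_step (n : nat) (c c' : config n) : Prop :=
  exists a b : 'I_n, (a < b)%N /\ c a = c b /\
    forall k : 'I_n,
      c' k = (if k == a then (c a - 1)%R else if k == b then (c b + 1)%R else c k).

Inductive topple_reach (n : nat) : config n -> config n -> Prop :=
| reach_refl c : topple_reach c c
| reach_step c c' c'' : topple_step c c' -> topple_reach c' c'' -> topple_reach c c''.

(* c topples to the permutation pi (with m + 1 = n chips, sites 0..m+1 = 0..n):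
   some sequence of topplings reaches a configuration with all chips within
   sites 0..n and at most one chip per site, and reading the chip labels from
   left to right gives pi_1, ..., pi_n (i.e. pi i is the (i+1)-th chip from the
   left). *)
Definition topples_to (n : nat) (c : config n) (pi : 'S_n) : Prop :=
  exists c' : config n, topple_reach c c' /\
    (forall k : 'I_n, (0 <= c' k)%R /\ (c' k <= Posz n)%R) /\
    (forall i j : 'I_n, (i < j)%N -> (c' (pi i) < c' (pi j))%R).

(* The set S(m,p) with m = n - 1: sites 0 and m+1 = n empty, one chip at each
   site of {1..m} \ {p}, two chips at site p. *)
Definition in_S (n p : nat) (c : config n) : Prop :=
  (forall k : 'I_n, (1 <= c k)%R /\ (c k <= Posz (n - 1)%N)%R) /\
  (forall s : nat, (1 <= s <= n - 1)%N ->
     #|[pred k : 'I_n | c k == Posz s]| = (if s == p then 2 else 1)%N).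

Definition p_resultant (n p : nat) (pi : 'S_n) : Prop :=
  exists c : config n, @in_S n p c /\ topples_to c pi.

(* Starting from S(n-1, p), toppling never puts more than j - i + 1 chips on
   an interval [i, j) of sites, so no site ever holds three chips: two
   different topplings move disjoint pairs and commute, and the stable outcome
   of a configuration is unique.  It can thus be computed along one canonical
   order.  Keep sites lo and hi empty, two chips on q and one chip on every
   other site of [0, n]: if q = lo + 1, fire q and freeze its smaller chip on
   lo; otherwise a wave of firings from q carries the largest chip of [q, hi)
   to hi.  The quantity lo + hi - q = n - p never changes, and counting chips
   shows that the frozen chips left of lo are always among the n - p smallest
   labels and those right of hi among the others.  The process stops with the
   hole at n - p and exactly the n - p smallest labels to its left.
   Conversely, if pi fixes {0, ..., n-p-1} setwise, put pi 0 and pi (n-1) on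
   site p, the other small chips to its right and the big ones to its left; in
   round j the big chip pi (n-1-j) is passed right through all small chips,
   and after p rounds the chips read pi from left to right. *)

From mathcomp Require Import all_boot all_order all_algebra all_fingroup.
From mathcomp Require Import zify.
From Stdlib Require Import FunctionalExtensionality.
Set Implicit Arguments. Unset Strict Implicit. Unset Printing Implicit Defensive.
Import GRing.Theory.
Local Open Scope ring_scope.

Lemma card_ord_lt n m : (m <= n)%N -> #|[pred x : 'I_n | (x < m)%N]| = m.
Proof.
move=> mn; rewrite -sum1_card -[RHS]card_ord -sum1_card.
by rewrite (big_ord_widen _ (fun=> 1%N) mn) big_mkcond [RHS]big_mkcond.
Qed.

Lemma card_ord_geq n m : (m <= n)%N -> #|[pred x : 'I_n | (m <= x)%N]| = (n - m)%N.
Proof.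
move=> mn; rewrite -[n in RHS]card_ord -(cardC [pred x : 'I_n | (x < m)%N]) card_ord_lt //.
by rewrite addKn; apply: eq_card => x; rewrite !inE leqNgt.
Qed.

(** * Toppling and confluence *)

Section Toppling.
Variable n : nat.
Implicit Types (c d : config n) (a b x y : 'I_n) (i j k s : int).

Definition fire c a b : config n :=
  fun x => if x == a then c a - 1 else if x == b then c b + 1 else c x.

Lemma fire_other c a b x : x != a -> x != b -> fire c a b x = c x.
Proof. by move=> /negbTE xa /negbTE xb; rewrite /fire xa xb. Qed.

Lemma fire_fst c a b : fire c a b a = c a - 1.
Proof. by rewrite /fire eqxx. Qed.

Lemma fire_snd c a b : a != b -> fire c a b b = c b + 1.
Proof. by rewrite /fire eq_sym => /negbTE->; rewrite eqxx. Qed.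

Lemma topple_step_fire c a b : (a < b)%N -> c a = c b -> topple_step c (fire c a b).
Proof. by move=> ab eab; exists a, b. Qed.

Lemma topple_stepE c c' : topple_step c c' ->
  exists a b, [/\ (a < b)%N, c a = c b & c' = fire c a b].
Proof.
case=> a [b [ab [eab Ec']]]; exists a, b; split=> //.
exact: functional_extensionality.
Qed.

Definition chips_in c i j := #|[pred x | i <= c x < j]|.

Definition load c s := chips_in c s (s + 1).

Lemma chips_in_cat c i j k : i <= j <= k ->
  chips_in c i k = (chips_in c i j + chips_in c j k)%N.
Proof.
move=> ijk; rewrite /chips_in -(cardID [pred x | c x < j]).
by congr (_ + _)%N; apply: eq_card => x; rewrite !inE; lia.
Qed.

Lemma chips_in_fire c a b i j : a != b -> c a = c b ->
  (chips_in (fire c a b) i j + 2 * (i <= c a < j)%R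
   = chips_in c i j + (i <= c a - 1 < j)%R + (i <= c a + 1 < j)%R)%N.
Proof.
move=> ab eab; have ba : b != a by rewrite eq_sym.
rewrite /chips_in (cardD1 a) (cardD1 b) [in RHS](cardD1 a) [in RHS](cardD1 b).
rewrite !inE /fire eqxx (negbTE ba) eqxx -eab.
set L := #|_|; set R := #|_|.
have -> : L = R by apply: eq_card => x; rewrite !inE; case: (x == b); case: (x == a).
lia.
Qed.

Lemma load_fire c a b s : a != b -> c a = c b ->
  (load (fire c a b) s + 2 * (s == c a)
   = load c s + (s == c a - 1)%R + (s == c a + 1)%R)%N.
Proof. by move=> ab eab; have := chips_in_fire s (s + 1) ab eab; rewrite /load; lia. Qed.

Lemma chips_in_empty c i j : j <= i -> chips_in c i j = 0.
Proof. by move=> ji; apply: eq_card0 => x; rewrite !inE; lia. Qed.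

Lemma chips_in_disjointU_le c (P : pred 'I_n) i j i' j' :
  (forall x, (i <= c x < j) || (i' <= c x < j') -> P x) -> j <= i' ->
  (chips_in c i j + chips_in c i' j' <= #|P|)%N.
Proof.
move=> sub ji'; rewrite /chips_in -cardUI (@eq_card0 _ [predI _ & _]) ?addn0.
  by apply/subset_leq_card/subsetP => x; rewrite !inE; apply: sub.
by move=> x; rewrite !inE; lia.
Qed.

Lemma load_gt1 c a b : a != b -> c a = c b -> (1 < load c (c a))%N.
Proof.
by move=> ab eab; apply/card_gt1P; exists a, b; rewrite !inE -{2}eab ab; split=> //; lia.
Qed.

(* For j = i + 1: no site holds three chips, so the pair fired at a site is
   determined by the site. *)
Definition sparse c := forall i j, i <= j -> (chips_in c i j)%:Z <= j - i + 1.

Lemma sparse_of_load c q : (forall s, (load c s <= 1 + (s == q)%R)%N) -> sparse c.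
Proof.
move=> L i j ij; have -> : j = i + (absz (j - i)%R)%:Z by lia.
suff bound l : (chips_in c i (i + l%:Z) <= l + (i <= q < i + l%:Z)%R)%N.
  by have := bound (absz (j - i)%R); lia.
elim: l => [|l IH]; first by rewrite addr0 chips_in_empty //; lia.
have -> : i + l.+1%:Z = i + l%:Z + 1 by lia.
rewrite (chips_in_cat c (j := i + l%:Z)); last by lia.
by have := L (i + l%:Z); rewrite /load; lia.
Qed.

Lemma sparse_fire c a b : a != b -> c a = c b -> sparse c -> sparse (fire c a b).
Proof.
move=> ab eab sc i j ij; have := chips_in_fire i j ab eab.
have := load_gt1 ab eab; rewrite /load => two.
have right_end : j = c a -> (chips_in c i j)%:Z <= j - i.
  move=> ja; subst j; have := sc i (c a + 1) ltac:(lia).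
  by rewrite (chips_in_cat c (j := c a) (k := c a + 1)); lia.
have left_end : i = c a + 1 -> (chips_in c i j)%:Z <= j - i.
  move=> ia; subst i; have := sc (c a) j ltac:(lia).
  by rewrite (chips_in_cat c (i := c a) (j := c a + 1)); lia.
have := sc i j ij; lia.
Qed.

Lemma sparse_step c c' : sparse c -> topple_step c c' -> sparse c'.
Proof.
move=> sc /topple_stepE[a [b [ab eab ->]]].
by apply: sparse_fire; rewrite ?neq_ltn ?ab.
Qed.

Lemma load_le2_site c a b x : (load c (c a) <= 2)%N -> a != b -> c a = c b -> c x = c a ->
  x = a \/ x = b.
Proof.
move=> c2 ab eab xa; case: (eqVneq x a) => [->|nxa]; first by left.
case: (eqVneq x b) => [->|nxb]; first by right.
suff : (2 < load c (c a))%N by rewrite ltnNge c2.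
apply/card_gt2P; exists a, b, x; rewrite !inE xa -eab ab (eq_sym b) nxb nxa.
by do !split=> //; lia.
Qed.

Lemma load2_pair c s : load c s = 2 ->
  exists a b, [/\ (a < b)%N, c a = s, c b = s & forall x, c x = s -> x = a \/ x = b].
Proof.
move=> c2; have /card_gt1P[a [b [+ + ab]]] : (1 < load c s)%N by rewrite c2.
rewrite !inE => sa sb; have ca : c a = s by lia.
have cb : c b = s by lia.
have site x : c x = s -> x = a \/ x = b.
  by move=> cx; apply: (@load_le2_site c a b x); rewrite ?ca ?cb ?cx ?c2.
case: (ltngtP a b) => [lt_ab|lt_ba|/val_inj eab]; first by exists a, b.
  by exists b, a; split=> // x /site[]; [right|left].
by rewrite eab eqxx in ab.
Qed.

Lemma load0_neq c s x : load c s = 0 -> c x != s.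
Proof. by move=> /card0_eq/(_ x); rewrite !inE; apply: contraFneq => ->; lia. Qed.

Lemma fire_comm c a b a' b' : a != a' -> a != b' -> b != a' -> b != b' ->
  fire (fire c a b) a' b' = fire (fire c a' b') a b.
Proof.
move=> aa' ab' ba' bb'; apply: functional_extensionality => x.
rewrite /fire ![a' == _]eq_sym ![b' == _]eq_sym.
rewrite (negbTE aa') (negbTE ab') (negbTE ba') (negbTE bb').
have [->|xa] := eqVneq x a; first by rewrite (negbTE aa') (negbTE ab').
have [->|xb] := eqVneq x b; first by rewrite (negbTE ba') (negbTE bb').
by [].
Qed.

Lemma topple_diamond c c1 c2 : sparse c -> topple_step c c1 -> topple_step c c2 ->
  c1 = c2 \/ exists d, topple_step c1 d /\ topple_step c2 d.
Proof.
move=> sc /topple_stepE[a [b [lt_ab eab ->]]] /topple_stepE[a' [b' [lt_ab' eab' ->]]].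
have nab : a != b by rewrite neq_ltn lt_ab.
have [e|ne] := eqVneq (c a') (c a).
  have le2 : (load c (c a) <= 2)%N by have := sc (c a) (c a + 1); rewrite /load; lia.
  left; have := load_le2_site le2 nab eab e.
  have := load_le2_site le2 nab eab (etrans (esym eab') e).
  by do 2!case=> ?; subst; move: lt_ab lt_ab' => //; lia.
right; have neq u v : c u != c v -> u != v by apply: contraNneq => ->.
have aa' : a != a' by rewrite neq // eq_sym.
have ab' : a != b' by rewrite neq // -eab' eq_sym.
have ba' : b != a' by rewrite neq // -eab eq_sym.
have bb' : b != b' by rewrite neq // -eab -eab' eq_sym.
exists (fire (fire c a b) a' b'); split.
  by apply: topple_step_fire; rewrite // !fire_other // eq_sym.
rewrite fire_comm //; apply: topple_step_fire; rewrite // !fire_other // eq_sym.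
Qed.

Lemma topple_reach_trans c1 c2 c3 :
  topple_reach c1 c2 -> topple_reach c2 c3 -> topple_reach c1 c3.
Proof. by elim=> // x y z xy _ IH /IH; apply: reach_step. Qed.

Lemma topple_strip c c1 d : sparse c -> topple_step c c1 -> topple_reach c d ->
  exists f, topple_reach c1 f /\ (f = d \/ topple_step d f).
Proof.
move=> + + cd; elim: cd c1 => [x c1 _ xc1|x y z xy yz IH c1 sx xc1].
  by exists c1; split; [exact: reach_refl | right].
case: (topple_diamond sx xc1 xy) => [->|[w [c1w yw]]]; first by exists z; split=> //; left.
have [f [wf zf]] := IH w (sparse_step sx xy) yw.
by exists f; split=> //; apply: reach_step c1w wf.
Qed.

Definition stable c := forall c', ~ topple_step c c'.

Lemma stable_reach_eq c d : stable c -> topple_reach c d -> d = c.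
Proof. by move=> sc cd; case: cd sc => // x y z xy _ /(_ _ xy). Qed.

Lemma stable_reach_unique c d1 d2 : sparse c -> topple_reach c d1 -> topple_reach c d2 ->
  stable d1 -> stable d2 -> d1 = d2.
Proof.
move=> sc cd1 cd2 st1 st2; apply: stable_reach_eq st2 _.
elim: cd2 sc cd1 => // x y z xy _ IH sx xd1.
apply: IH (sparse_step sx xy) _.
by have [f [yf [<-|/st1]]] := topple_strip sx xy xd1.
Qed.

Lemma injective_stable c : injective c -> stable c.
Proof. by move=> inj c' /topple_stepE[a [b [ab /inj eab _]]]; rewrite eab ltnn in ab. Qed.


(** * The canonical toppling order *)

Lemma fire_pair c q a b : (a < b)%N -> c a = q -> c b = q ->
  [/\ topple_step c (fire c a b), fire c a b a = q - 1, fire c a b b = q + 1,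
      forall x, c x != q -> fire c a b x = c x &
      forall s, (load (fire c a b) s + 2 * (s == q)
                 = load c s + (s == q - 1)%R + (s == q + 1)%R)%N].
Proof.
move=> lt_ab ca cb; have ab : a != b by rewrite neq_ltn lt_ab.
have eab : c a = c b by rewrite ca cb.
split=> [||| x xq | s].
- exact: topple_step_fire.
- by rewrite fire_fst ca.
- by rewrite fire_snd // cb.
- by rewrite fire_other //; apply: contraNneq xq => ->; rewrite ?ca ?cb.
- by rewrite -ca load_fire.
Qed.

Lemma topple_wave c q (k : nat) : load c q = 2 ->
  (forall s, q < s <= q + k%:Z -> load c s = 1) ->
  exists d M, [/\ topple_reach c d,
    forall s, (load d s + (s == q) + (s == q + k%:Z)%R
               = load c s + (s == q - 1)%R + (s == q + k%:Z + 1)%R)%N,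
    forall x, ~~ (q <= c x <= q + k%:Z) -> d x = c x,
    d M = q + k%:Z + 1 &
    forall x, q <= c x <= q + k%:Z -> (x <= M)%N /\ (x != M -> q - 1 <= d x <= q + k%:Z)].
Proof.
elim: k c q => [|k IH] c q c2 c1; have [a [b [lt_ab ca cb site]]] := load2_pair c2;
  have [step fire_a fire_b fire_off Lfire] := fire_pair lt_ab ca cb.
  exists (fire c a b), b; split=> [| | x xq | | x xq].
  - exact: reach_step step (reach_refl _).
  - by move=> s; have := Lfire s; lia.
  - by apply: fire_off; lia.
  - by rewrite fire_b; lia.
  - have [->|->] := site x ltac:(lia); last by rewrite eqxx.
    by split; [exact: ltnW | rewrite fire_a; lia].
have [|s sq|d [M [c'd Ld Fd dM HM]]] := IH (fire c a b) (q + 1).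
- by have := Lfire (q + 1); have := c1 (q + 1); lia.
- by have := Lfire s; have := c1 s; lia.
have Mb : (b <= M)%N by apply: (HM b _).1; rewrite fire_b; lia.
exists d, M; split=> [| | x xq | | x xq].
- exact: reach_step step c'd.
- by move=> s; have := Lfire s; have := Ld s; lia.
- have fx : fire c a b x = c x by apply: fire_off; lia.
  by rewrite -fx; apply: Fd; rewrite fx; lia.
- by rewrite dM; lia.
have [->|xa] := eqVneq x a.
  by split; [exact: leq_trans (ltnW lt_ab) Mb | rewrite Fd fire_a //; lia].
have xq' : q + 1 <= fire c a b x <= q + 1 + k%:Z.
  have [->|xb] := eqVneq x b; first by rewrite fire_b; lia.
  have cxq : c x != q by apply/eqP => /site[] e; [move: xa | move: xb]; rewrite e eqxx.
  by rewrite fire_off //; lia.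
by have [xM dx] := HM x xq'; split=> // /dx; lia.
Qed.

End Toppling.

Section Phases.
Variables n h : nat.
Implicit Types (c d : config n) (x : 'I_n) (lo q hi i j s : int).

(* h is the final position of the hole; the chips labelled below h are the
   small ones. *)
Definition phase_state c lo q hi :=
  [/\ lo + hi = q + h%:Z /\ [&& 0 <= lo, lo < q, q <= hi & hi <= n%:Z],
      forall x, 0 <= c x <= n%:Z,
      forall s, 0 <= s <= n%:Z -> (load c s + (s == lo) + (s == hi) = 1 + (s == q))%N,
      forall x, c x < lo -> (x < h)%N &
      forall x, hi < c x -> (h <= x)%N].

Lemma phase_chips_in c lo q hi i j :
  phase_state c lo q hi -> 0 <= i <= j -> j <= n%:Z + 1 ->
  (chips_in c i j + (i <= lo < j)%R + (i <= hi < j)%R = absz (j - i)%R + (i <= q < j)%R)%N.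
Proof.
move=> [_ _ L _ _] /andP[i0 ij]; have -> : j = i + (absz (j - i)%R)%:Z by lia.
elim: (absz (j - i)%R) => [|l IH] jn; first by rewrite addr0 chips_in_empty //; lia.
have -> : i + l.+1%:Z = i + l%:Z + 1 by lia.
rewrite (chips_in_cat c (j := i + l%:Z)); last by lia.
by have := L (i + l%:Z) ltac:(lia); have := IH ltac:(lia); rewrite /load; lia.
Qed.

Lemma phase_left c lo q hi : phase_state c lo q hi -> q = lo + 1 -> q < hi ->
  exists d, topple_step c d /\ phase_state d (lo + 1) (q + 1) hi.
Proof.
move=> st qlo qhi; have [[eqh ord] rng L fl fr] := st.
have c2 : load c q = 2 by have := L q ltac:(lia); lia.
have [a [b [lt_ab ca cb site]]] := load2_pair c2.
have [step fire_a fire_b fire_off Lfire] := fire_pair lt_ab ca cb.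
(* Otherwise a, b and the n - hi chips right of hi would be n - h + 1 big
   chips, as h = hi - 1 here. *)
have small_a : (a < h)%N.
  rewrite ltnNge; apply/negP => ha.
  have big x : (q <= c x < q + 1) || (hi + 1 <= c x < n%:Z + 1) -> (h <= x)%N.
    case/orP => [xq | xhi]; last by apply: fr; lia.
    have [->|->] := site x ltac:(lia); first exact: ha.
    exact: leq_trans ha (ltnW lt_ab).
  have := chips_in_disjointU_le (P := [pred x : 'I_n | (h <= x)%N]) big ltac:(lia).
  rewrite card_ord_geq; last by lia.
  have := phase_chips_in (i := hi + 1) (j := n%:Z + 1) st ltac:(lia) ltac:(lia).
  by move: c2; rewrite /load; lia.
have lo0 : load c lo = 0 by have := L lo ltac:(lia); lia.
exists (fire c a b); split=> //; split=> [|x|s sn|x|x].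
- lia.
- move: (rng x); have [/site[]->|/fire_off->] := eqVneq (c x) q; rewrite ?fire_a ?fire_b;
    by lia.
- by have := Lfire s; have := L s sn; lia.
- have [/site[]->|/fire_off->] := eqVneq (c x) q; rewrite ?fire_a ?fire_b //; first lia.
  by move=> cx; apply: fl; have := load0_neq x lo0; lia.
- have [/site[]->|/fire_off->] := eqVneq (c x) q; rewrite ?fire_a ?fire_b;
    [lia | lia | exact: fr].
Qed.

Lemma phase_right c lo q hi : phase_state c lo q hi -> lo + 1 < q -> q < hi ->
  exists d, topple_reach c d /\ phase_state d lo (q - 1) (hi - 1).
Proof.
move=> st lq qhi; have [[eqh ord] rng L fl fr] := st.
have [|s sq|d [M [cd Ld Fd dM HM]]] := @topple_wave _ c q (absz (hi - 1 - q)%R).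
- by have := L q ltac:(lia); lia.
- by have := L s ltac:(lia); lia.
have hk : q + (absz (hi - 1 - q)%R)%:Z = hi - 1 by lia.
rewrite hk in Ld Fd dM HM.
(* Otherwise the lo chips left of lo and the hi - q + 1 chips of [q, hi) would
   be h + 1 small chips. *)
have big_M : (h <= M)%N.
  rewrite leqNgt; apply/negP => hM.
  have small x : (0 <= c x < lo) || (q <= c x < hi) -> (x < h)%N.
    case/orP => [xlo | xq]; first by apply: fl; lia.
    by apply: leq_ltn_trans hM; apply: (HM x _).1; lia.
  have := chips_in_disjointU_le (P := [pred x : 'I_n | (x < h)%N]) small ltac:(lia).
  rewrite card_ord_lt; last by lia.
  have E1 : chips_in c 0 lo = absz lo.
    by have := phase_chips_in (i := 0) (j := lo) st ltac:(lia) ltac:(lia); lia.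
  have E2 : chips_in c q hi = (absz (hi - q)%R).+1.
    by have := phase_chips_in (i := q) (j := hi) st ltac:(lia) ltac:(lia); lia.
  by rewrite E1 E2; lia.
have hi0 : load c hi = 0 by have := L hi ltac:(lia); lia.
exists d; split=> //; split=> [|x|s sn|x|x].
- lia.
- move: (rng x); case: (boolP (q <= c x <= hi - 1)) => [/HM[_ dx]|/Fd->] //.
  by have [->|/dx] := eqVneq x M; [rewrite dM|]; lia.
- by have := Ld s; have := L s sn; lia.
- case: (boolP (q <= c x <= hi - 1)) => [/HM[_ dx]|/Fd->]; last exact: fl.
  by have [->|/dx] := eqVneq x M; [rewrite dM|]; lia.
- case: (boolP (q <= c x <= hi - 1)) => [/HM[_ dx]|xq].
    by have [->|/dx] := eqVneq x M; [|lia].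
  by rewrite Fd // => cx; apply: fr; have := load0_neq x hi0; lia.
Qed.

Lemma phase_terminate c lo q hi : phase_state c lo q hi ->
  exists d q', topple_reach c d /\ phase_state d h%:Z q' q'.
Proof.
have [k] := ubnP (absz (hi - lo)%R); elim: k c lo q hi => // k IH c lo q hi hk st.
have [[eqh ord] _ _ _ _] := st.
have [qhi|qhi] : q = hi \/ q < hi by lia.
  exists c, q; split; first exact: reach_refl.
  by subst q; have -> : h%:Z = lo by lia.
have [qlo|qlo] : q = lo + 1 \/ lo + 1 < q by lia.
  have [d [cd st']] := phase_left st qlo qhi.
  have [d' [q' [dd' st'']]] := IH d (lo + 1) (q + 1) hi ltac:(lia) st'.
  by exists d', q'; split=> //; apply: reach_step cd dd'.
have [d [cd st']] := phase_right st qlo qhi.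
have [d' [q' [dd' st'']]] := IH d lo (q - 1) (hi - 1) ltac:(lia) st'.
by exists d', q'; split=> //; apply: topple_reach_trans cd dd'.
Qed.

Lemma phase_final d q : phase_state d h%:Z q q ->
  [/\ injective d, forall x, d x != h%:Z & forall x, (d x < h%:Z) = (x < h)%N].
Proof.
move=> st; have [[eqh ord] rng L fl _] := st.
split=> [x y dxy | x | x].
- apply/eqP; apply: contraT => xy; have := load_gt1 xy dxy.
  by have := L (d x) (rng x); lia.
- by apply: load0_neq; have := L h%:Z ltac:(lia); lia.
apply/idP/idP => [/fl // | xh].
have below_h : chips_in d 0 h%:Z = h.
  by have := phase_chips_in (i := 0) (j := h%:Z) st ltac:(lia) ltac:(lia); lia.
have /subset_cardP E : chips_in d 0 h%:Z = #|[pred y : 'I_n | (y < h)%N]|.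
  by rewrite below_h card_ord_lt //; lia.
have /E same : [pred y | 0 <= d y < h%:Z] \subset [pred y : 'I_n | (y < h)%N].
  by apply/subsetP => y; rewrite !inE => /andP[_ /fl].
by have := same x; rewrite !inE xh => /andP[].
Qed.

End Phases.

Lemma in_S_load n p c : (1 <= p <= n - 1)%N -> @in_S n p c ->
  forall s, (load c s = (0 < s < n%:Z)%R + (s == p%:Z)%R)%N.
Proof.
move=> hp [rng cnt] s; have [/andP[s0 sn] | out] := boolP (0 < s < n%:Z).
  case: s s0 sn => [s|//] s0 sn.
  have -> : load c s = #|[pred k | c k == Posz s]| by apply: eq_card => x; rewrite !inE; lia.
  by rewrite cnt ?eqz_nat; [case: eqP; lia | lia].
have -> : load c s = 0 by apply: eq_card0 => x; rewrite !inE; have := rng x; lia.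
lia.
Qed.

Lemma in_S_phase_state n p c : (1 <= p <= n - 1)%N -> @in_S n p c ->
  phase_state (n - p) c 0 p%:Z n%:Z.
Proof.
move=> hp Sc; have [rng _] := Sc; have L := in_S_load hp Sc.
split=> [|x|s sn|x|x]; first by lia.
- by have := rng x; lia.
- by have := L s; lia.
- by have := rng x; lia.
- by have := rng x; lia.
Qed.

Lemma increasing_ord_bounds n (f : 'I_n -> int) :
  (forall i j : 'I_n, (i < j)%N -> f i < f j) -> (forall i, 0 <= f i /\ f i <= n%:Z) ->
  forall i : 'I_n, i%:Z <= f i <= i%:Z + 1.
Proof.
move=> incr rng.
have lower k (i : 'I_n) : i = k :> nat -> k%:Z <= f i.
  elim: k i => [|k IH] i ik; first by have := rng i; lia.
  have k_n : (k < n)%N by have := ltn_ord i; lia.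
  by have := IH (Ordinal k_n) erefl; have := incr (Ordinal k_n) i ltac:(rewrite /= ik); lia.
have upper m (i : 'I_n) : (n - i)%N = m -> f i <= i%:Z + 1.
  elim: m i => [|m IH] i im; first by have := ltn_ord i; lia.
  have [i_last | i_n] := eqVneq i.+1 n; first by have := rng i; lia.
  have i1n : (i.+1 < n)%N by have := ltn_ord i; lia.
  have := IH (Ordinal i1n) ltac:(rewrite /=; lia); have := incr i (Ordinal i1n) (ltnSn i).
  by rewrite /=; lia.
by move=> i; have := lower _ i erefl; have := upper _ i erefl; lia.
Qed.

Lemma p_resultant_prefix n p (pi : 'S_n) : (1 <= p <= n - 1)%N -> @p_resultant n p pi ->
  forall i, (pi i < n - p)%N = (i < n - p)%N.
Proof.
move=> hp [c [Sc [c' [cc' [rng' incr]]]]] i.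
have sc : sparse c.
  by apply: (sparse_of_load (q := p%:Z)) => s; rewrite (in_S_load hp Sc); lia.
have [d [q [cd /phase_final [inj_d hole sorted]]]] := phase_terminate (in_S_phase_state hp Sc).
have inj_c' : injective c'.
  move=> x y e; rewrite -(permKV pi x) -(permKV pi y); congr (pi _).
  case: (ltngtP ((pi^-1)%g x) ((pi^-1)%g y)) => [lt|lt|/val_inj //];
    by have := incr _ _ lt; rewrite !permKV e; lia.
have c'd := stable_reach_unique sc cc' cd (injective_stable inj_c') (injective_stable inj_d).
subst d.
have := increasing_ord_bounds incr (fun j => rng' (pi j)) i.
by rewrite -sorted; have := hole (pi i); lia.
Qed.

Lemma perm_prefixP n m (pi : 'S_n) :
  [set pi i | i : 'I_n & (i < m)%N] = [set i : 'I_n | (i < m)%N] <->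
  forall i, (pi i < m)%N = (i < m)%N.
Proof.
split=> [E i | H].
  by move/setP/(_ (pi i)): E; rewrite mem_imset ?inE //; exact: perm_inj.
apply/setP => x; rewrite -[x](permKV pi) mem_imset ?inE ?H //; exact: perm_inj.
Qed.

Lemma card_perm_comp (T : finType) (g : {perm T}) (P : pred T) :
  #|[pred x | P (g x)]| = #|P|.
Proof.
rewrite -[RHS]cardsE -(card_preimset _ (@perm_inj _ g)).
by apply: eq_card => x; rewrite !inE.
Qed.

(** * Sweeps *)

Section Sweeps.
Variables (n p : nat) (pi : 'S_n).
Hypothesis hp : (1 <= p <= n - 1)%N.
Hypothesis pi_prefix : forall i, (pi i < n - p)%N = (i < n - p)%N.
Local Notation h := (n - p)%N.

(* Site of chip pi i after k steps of round j: the small chips pi i, i < h,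
   have each moved left once per finished round (and once more if already
   passed in round j), big chips pi (n-1-j') already carried (j' < j) sit at
   n - j', the one carried in round j sits at p - j + k, and the others keep
   their initial sites 1, ..., p - j - 1. *)
Definition sweep_site (j k : nat) (i : 'I_n) : int :=
  if (i < h)%N then (if (i < k)%N then p%:Z - j%:Z - 1 + i%:Z else p%:Z - j%:Z + i%:Z)
  else if (n - 1 - i < j)%N then i%:Z + 1
  else if (n - 1 - i == j)%N then p%:Z - j%:Z + k%:Z
  else i%:Z + 1 - h%:Z.

Definition sweep j k : config n := fun x => sweep_site j k ((pi^-1)%g x).

Lemma sweep_pi j k i : sweep j k (pi i) = sweep_site j k i.
Proof. by rewrite /sweep permK. Qed.

Lemma sweep_step j k : (j < p)%N -> (k < h)%N -> topple_step (sweep j k) (sweep j k.+1).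
Proof.
move=> jp kh; have kn : (k < n)%N by lia.
have bn : (n - 1 - j < n)%N by lia.
have := pi_prefix (Ordinal kn); have := pi_prefix (Ordinal bn); rewrite /= => big small.
exists (pi (Ordinal kn)), (pi (Ordinal bn)); split; first by lia.
split; first by rewrite !sweep_pi /sweep_site /=; do ![case: ifP => ?]; lia.
move=> x; rewrite -(permKV pi x) !sweep_pi !(inj_eq perm_inj) -!val_eqE /=.
have := ltn_ord ((pi^-1)%g x); rewrite /sweep_site /=; do ![case: ifP => ?]; lia.
Qed.

Lemma sweep_round j : (j < p)%N -> topple_reach (sweep j 0) (sweep j.+1 0).
Proof.
move=> jp; have -> : sweep j.+1 0 = sweep j h.
  apply: functional_extensionality => x; have := ltn_ord ((pi^-1)%g x).
  by rewrite /sweep /sweep_site; do ![case: ifP => ?]; lia.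
suff reach k : (k <= h)%N -> topple_reach (sweep j 0) (sweep j k) by exact: reach.
elim: k => [|k IH] kh; first exact: reach_refl.
exact: topple_reach_trans (IH (ltnW kh)) (reach_step (sweep_step jp kh) (reach_refl _)).
Qed.

Lemma sweep_reach : topple_reach (sweep 0 0) (sweep p 0).
Proof.
suff reach j : (j <= p)%N -> topple_reach (sweep 0 0) (sweep j 0) by exact: reach.
elim: j => [|j IH] jp; first exact: reach_refl.
exact: topple_reach_trans (IH (ltnW jp)) (sweep_round jp).
Qed.

Lemma sweep_start i : sweep_site 0 0 i = if (i < h)%N then p%:Z + i%:Z else i%:Z + 1 - h%:Z.
Proof. by have := ltn_ord i; rewrite /sweep_site; do ![case: ifP => ?]; lia. Qed.

Lemma sweep_start_in_S : @in_S n p (sweep 0 0).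
Proof.
split=> [x | s hs].
  rewrite -(permKV pi x) sweep_pi sweep_start.
  by have := ltn_ord ((pi^-1)%g x); case: ifP; lia.
rewrite (card_perm_comp (pi^-1)%g [pred i | sweep_site 0 0 i == Posz s]).
case: (ltngtP s p) => [sp | ps | sp]; last subst s.
- have w : (s + h - 1 < n)%N by lia.
  apply: (@eq_card1 _ (Ordinal w)) => i; rewrite !inE sweep_start -val_eqE /=.
  by have := ltn_ord i; case: ifP => ? ?; apply/eqP/eqP; lia.
- have w : (s - p < n)%N by lia.
  apply: (@eq_card1 _ (Ordinal w)) => i; rewrite !inE sweep_start -val_eqE /=.
  by have := ltn_ord i; case: ifP => ? ?; apply/eqP/eqP; lia.
- have w0 : (0 < n)%N by lia.
  have w1 : (n - 1 < n)%N by lia.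
  rewrite (@eq_card _ _ (pred2 (Ordinal w0) (Ordinal w1))) ?card2 -?val_eqE /=; first lia.
  move=> i; rewrite !inE sweep_start -!val_eqE /=.
  by have := ltn_ord i; case: ifP => ? ?; apply/eqP/orP; lia.
Qed.

Lemma sweep_final i : sweep p 0 (pi i) = if (i < h)%N then i%:Z else i%:Z + 1.
Proof.
by rewrite sweep_pi; have := ltn_ord i; rewrite /sweep_site; do ![case: ifP => ?]; lia.
Qed.

Lemma prefix_p_resultant : @p_resultant n p pi.
Proof.
exists (sweep 0 0); split; first exact: sweep_start_in_S.
exists (sweep p 0); split; first exact: sweep_reach.
split=> [x | i j ij].
  by rewrite -(permKV pi x) sweep_final; have := ltn_ord ((pi^-1)%g x); case: ifP; lia.
by rewrite !sweep_final; do 2!case: ifP => ?; lia.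
Qed.

End Sweeps.

Theorem theorem2p10 (n p : nat) (pi : 'S_n) :
  (2 <= n)%N -> (1 <= p <= n - 1)%N ->
  @p_resultant n p pi <->
  [set pi i | i : 'I_n & (i < n - p)%N] = [set i : 'I_n | (i < n - p)%N].
Proof.
move=> _ hp; rewrite perm_prefixP; split; first exact: p_resultant_prefix.
exact: prefix_p_resultant.
Qed.
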